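(* Let $i\in\{1,2\}$ and let $X$ be a digital image. Then $X$ is $\mathrm{NP}_i$-irreducible if and only if no automorphism of $X$ is $\mathrm{NP}_i$-homotopic to a non-surjective map $X\to X$.
   Context: A digital image is a finite set $X\subset\mathbb{Z}^n$ with a reflexive symmetric adjacency relation (a finite reflexive graph); continuous maps send adjacent points to adjacent points; an automorphism is a continuous bijection $X\to X$ with continuous inverse. On products, $\mathrm{NP}_u$ declares two tuples adjacent iff coordinates are adjacent in at most $u$ positions and equal elsewhere. An $\mathrm{NP}_i$-homotopy from $f$ to $g:X\to Y$ is an $\mathrm{NP}_i$-continuous $H:X\times[0,m]_{\mathbb{Z}}\to Y$ (interval with $a\sim b\iff|a-b|\le1$) with $H(\cdot,0)=f$, $H(\cdot,m)=g$; write $f\simeq_i g$. $X,Y$ are $\mathrm{NP}_i$-homotopy equivalent if there are continuous $f:X\to Y$, $g:Y\to X$ with $g\circ f\simeq_i\mathrm{id}_X$, $f\circ g\simeq_i\mathrm{id}_Y$. $X$ is $\mathrm{NP}_i$-irreducible if it is not $\mathrm{NP}_i$-homotopy equivalent to a digital image with fewer points. *)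

From mathcomp Require Import all_boot.
Set Implicit Arguments. Unset Strict Implicit. Unset Printing Implicit Defensive.

Record dimage := DImage {
  dpt :> finType;
  dadj : rel dpt;
  dadj_refl : reflexive dadj;
  dadj_sym : symmetric dadj
}.

Definition dcontinuous (X Y : dimage) (f : X -> Y) : Prop :=
  forall x x' : X, dadj x x' -> dadj (f x) (f x').

Definition dautomorphism (X : dimage) (a : X -> X) : Prop :=
  dcontinuous a /\
  exists b : X -> X, [/\ cancel a b, cancel b a & dcontinuous b].

(* adjacency on the digital interval [0,m]_Z, represented by 'I_m.+1 *)
Definition iadj (m : nat) (s t : 'I_m.+1) : bool :=
  (s <= t.+1) && (t <= s.+1).

(* NP_u adjacency on the product X x [0,m]_Z: coordinates adjacent in at
   most u positions and equal elsewhere. *)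
Definition NPadj (u : nat) (X : dimage) (m : nat) (p q : X * 'I_m.+1) : bool :=
  [&& dadj p.1 q.1, iadj p.2 q.2 & (p.1 != q.1) + (p.2 != q.2) <= u].

Definition NPhomotopic (u : nat) (X Y : dimage) (f g : X -> Y) : Prop :=
  exists (m : nat) (H : X -> 'I_m.+1 -> Y),
    [/\ (forall p q : X * 'I_m.+1, NPadj u p q -> dadj (H p.1 p.2) (H q.1 q.2)),
        (forall x, H x ord0 = f x) &
        (forall x, H x ord_max = g x)].

Definition NPhomotopy_equiv (u : nat) (X Y : dimage) : Prop :=
  exists (f : X -> Y) (g : Y -> X),
    [/\ dcontinuous f, dcontinuous g,
        NPhomotopic u (g \o f) id & NPhomotopic u (f \o g) id].

Definition NPirreducible (u : nat) (X : dimage) : Prop :=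
  ~ exists Y : dimage, #|Y| < #|X| /\ NPhomotopy_equiv u X Y.

From mathcomp Require Import all_boot zify.
Set Implicit Arguments. Unset Strict Implicit. Unset Printing Implicit Defensive.

(* If an automorphism a is homotopic to a non-surjective g, then id is
   homotopic to the non-surjective h := a^-1 g, hence to every iterate of h,
   in particular to an idempotent one e (there are finitely many self-maps).
   Then X is homotopy equivalent to the proper subimage of fixed points of e
   (a deformation retract).
   Conversely, an equivalence f : X -> Y, g : Y -> X with #|Y| < #|X| makes
   id_X homotopic to g \o f, which is not surjective as it factors through Y. *)

(* Homotopies indexed by all of nat and constant from time m on: unlike
   [NPhomotopic], these concatenate without casts between ordinal types. *)
Definition NPhomotopicN (u : nat) (X Y : dimage) (f g : X -> Y) : Prop :=
  exists m (H : X -> nat -> Y),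
    [/\ (forall x x' t t', dadj x x' -> t <= t'.+1 -> t' <= t.+1 ->
           (x != x') + (t != t') <= u -> dadj (H x t) (H x' t')),
        (forall x, H x 0 = f x) &
        (forall x t, m <= t -> H x t = g x)].

Lemma leq_neq (A B : eqType) (a b : A) (c d : B) :
  (a = b -> c = d) -> (c != d) <= (a != b).
Proof. by case: (eqVneq a b) => [e /(_ e) ->|]; rewrite ?eqxx // leq_b1. Qed.

Section NPhomotopy.
Variables (u : nat) (X Y : dimage).
Implicit Types f g h : X -> Y.

Lemma NPhomotopicP f g : NPhomotopic u f g <-> NPhomotopicN u f g.
Proof.
split=> [[m [H [HA H0 Hm]]] | [m [H [HA H0 Hm]]]].
- have clamp t : minn t m < m.+1 by rewrite ltnS geq_minr.
  exists m, (fun x t => H x (inord (minn t m))); split.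
  + move=> x x' t t' xx tt' t't c.
    apply: (HA (x, inord (minn t m)) (x', inord (minn t' m))).
    rewrite /NPadj /= xx /iadj !inordK //=.
    apply/andP; split; first by apply/andP; split; lia.
    by apply: leq_trans c; rewrite leq_add2l; apply: leq_neq => ->.
  + move=> x; rewrite -H0; congr H; apply: val_inj.
    by rewrite /= inordK ?min0n.
  + move=> x t mt; rewrite -Hm; congr H; apply: val_inj.
    by rewrite /= inordK //; lia.
- exists m, (fun x (s : 'I_m.+1) => H x s); split => // [[x s] [x' s'] | x].
  + by move=> /and3P [xx /andP[ss' s's] c]; apply: HA.
  + exact: Hm.
Qed.

Lemma NPhomotopicN_eq f f' g g' :
  f =1 f' -> g =1 g' -> NPhomotopicN u f g -> NPhomotopicN u f' g'.
Proof.
move=> ef eg [m [H [HA H0 Hm]]]; exists m, H; split => //.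
- by move=> x; rewrite H0.
- by move=> x t mt; rewrite Hm.
Qed.

Lemma NPhomotopicN_refl f : dcontinuous f -> NPhomotopicN u f f.
Proof. by move=> cf; exists 0, (fun x _ => f x); split => // x x' *; apply: cf. Qed.

Lemma NPhomotopicN_sym f g : NPhomotopicN u f g -> NPhomotopicN u g f.
Proof.
move=> [m [H [HA H0 Hm]]]; exists m, (fun x t => H x (m - t)); split.
- by move=> x x' t t' xx tt' t't c; apply: HA => //; lia.
- by move=> x; rewrite subn0 Hm.
- by move=> x t mt; have -> : m - t = 0 by lia.
Qed.

Lemma NPhomotopicN_trans f g h :
  NPhomotopicN u f g -> NPhomotopicN u g h -> NPhomotopicN u f h.
Proof.
move=> [m1 [H1 [HA1 H01 Hm1]]] [m2 [H2 [HA2 H02 Hm2]]].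
exists (m1 + m2), (fun x t => if t < m1 then H1 x t else H2 x (t - m1)); split.
- move=> x x' t t' xx tt' t't c.
  case: (ltnP t m1) => tm; case: (ltnP t' m1) => t'm.
  + exact: HA1.
  + have -> : t' = m1 by lia.
    by rewrite subnn H02 -(Hm1 x' m1) //; apply: HA1 => //; lia.
  + have -> : t = m1 by lia.
    by rewrite subnn H02 -(Hm1 x m1) //; apply: HA1 => //; lia.
  + by apply: HA2 => //; lia.
- move=> x /=; case: ifP => // /negbT; rewrite -leqNgt leqn0 => /eqP m10.
  by rewrite m10 subn0 H02 -(Hm1 x 0) ?m10.
- move=> x t mt; have -> : (t < m1) = false by lia.
  by apply: Hm2; lia.
Qed.

(* For u = 0 the homotopy condition is vacuous, so any g would do. *)
Lemma NPhomotopicN_continuous f g :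
  0 < u -> NPhomotopicN u f g -> dcontinuous g.
Proof.
move=> u_gt0 [m [H [HA H0 Hm]]] x x' xx.
rewrite -(Hm x m) // -(Hm x' m) //; apply: HA => //.
by rewrite eqxx addn0; apply: leq_trans u_gt0; rewrite leq_b1.
Qed.

End NPhomotopy.

Lemma NPhomotopicN_comp_l u (X Y Z : dimage) (k : Y -> Z) (f g : X -> Y) :
  dcontinuous k -> NPhomotopicN u f g -> NPhomotopicN u (k \o f) (k \o g).
Proof.
move=> ck [m [H [HA H0 Hm]]]; exists m, (fun x t => k (H x t)); split.
- by move=> *; apply: ck; apply: HA.
- by move=> x /=; rewrite H0.
- by move=> x t mt /=; rewrite Hm.
Qed.

Lemma NPhomotopicN_iter u (X : dimage) (h : X -> X) :
  dcontinuous h -> NPhomotopicN u id h -> forall n, NPhomotopicN u id (iter n h).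
Proof.
move=> ch idh; elim=> [|n IHn]; first exact: NPhomotopicN_refl.
apply: NPhomotopicN_trans idh _.
exact: NPhomotopicN_eq (NPhomotopicN_comp_l ch IHn).
Qed.

Lemma iter_idempotent_of_eq (T : Type) (h : T -> T) i j :
  i < j -> iter i h =1 iter j h ->
  exists2 n, 0 < n & idempotent_fun (iter n h).
Proof.
move=> ij Eij; pose p := j - i.
have iter_p t x : i <= t -> iter (t + p) h x = iter t h x.
  move=> it; have -> : t + p = (t - i) + j by rewrite /p; lia.
  by rewrite iterD -Eij -iterD subnK.
have iter_mulp q t x : i <= t -> iter (t + q * p) h x = iter t h x.
  elim: q t => [|q IHq] t it; first by rewrite mul0n addn0.
  by rewrite mulSn addnA IHq ?iter_p //; lia.
(* (i+1)p is both a multiple of the period p and at least the preperiod i. *)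
exists (i.+1 * p); first by rewrite muln_gt0 subn_gt0 ij.
by move=> x; rewrite /= -iterD iter_mulp // /p; nia.
Qed.

Lemma iter_idempotent (T : finType) (h : T -> T) :
  exists2 n, 0 < n & idempotent_fun (iter n h).
Proof.
pose N := #|{ffun T -> T}|.
pose F (j : 'I_N.+1) := [ffun x => iter j h x].
have /injectivePn [i [j ij Fij]] : ~~ injectiveb F.
  by apply/negP => /injectiveP/leq_card; rewrite card_ord ltnn.
have Eij : iter i h =1 iter j h.
  by move=> x; have := congr1 (fun G : {ffun T -> T} => G x) Fij; rewrite !ffunE.
case: (ltngtP i j) => [lt_ij | lt_ji | /val_inj eq_ij].
- exact: iter_idempotent_of_eq lt_ij Eij.
- by apply: iter_idempotent_of_eq lt_ji _ => x; rewrite Eij.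
- by rewrite eq_ij eqxx in ij.
Qed.

Section FixedImage.
Variables (X : dimage) (e : X -> X).

Definition fixed_point := {x : X | e x == x}.
Definition fixed_adj (s t : fixed_point) : bool := dadj (val s) (val t).
Lemma fixed_adj_refl : reflexive fixed_adj. Proof. by move=> s; apply: dadj_refl. Qed.
Lemma fixed_adj_sym : symmetric fixed_adj. Proof. by move=> s t; apply: dadj_sym. Qed.
Definition fixed_image : dimage := DImage fixed_adj_refl fixed_adj_sym.

Lemma card_fixed_image_lt :
  ~ (forall y : X, exists x, e x = y) -> #|fixed_image| < #|X|.
Proof.
move=> e_nsurj; rewrite /= card_sig ltnNge; apply/negP => le_X_fixed.
apply: e_nsurj => y; exists y; apply/eqP.
have eq_card : #|[pred x | e x == x]| = #|X|.
  by apply/eqP; rewrite eqn_leq max_card le_X_fixed.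
have all_fixed : [pred x | e x == x] =i X.
  by apply/(subset_cardP eq_card); apply/subsetP.
by have := all_fixed y; rewrite !inE.
Qed.

Lemma NPhomotopy_equiv_fixed_image u :
  dcontinuous e -> idempotent_fun e -> NPhomotopicN u id e ->
  NPhomotopy_equiv u X fixed_image.
Proof.
move=> ce e_idem id_e.
pose r x : fixed_image := exist _ (e x) (introT eqP (e_idem x)).
exists r, val; split => [x x' xx|s t st||].
- exact: ce.
- exact: st.
- by apply/NPhomotopicP; apply: NPhomotopicN_sym.
- apply/NPhomotopicP/(NPhomotopicN_eq (f := id) (g := id)) => //.
    by move=> [x fx]; apply: val_inj; rewrite /= (eqP fx).
  exact: NPhomotopicN_refl.
Qed.

End FixedImage.

Lemma NPreducible_of_aut_homotopic_nonsurj u (X : dimage) (a g : X -> X) :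
  0 < u -> dautomorphism a -> ~ (forall y, exists x, g x = y) ->
  NPhomotopic u a g -> exists Y : dimage, #|Y| < #|X| /\ NPhomotopy_equiv u X Y.
Proof.
move=> u_gt0 [_ [b [ab ba cb]]] g_nsurj /NPhomotopicP ag.
pose h := b \o g.
have id_h : NPhomotopicN u id h.
  exact: NPhomotopicN_eq (NPhomotopicN_comp_l cb ag).
have [n n_gt0 e_idem] := iter_idempotent h.
have id_e := NPhomotopicN_iter (NPhomotopicN_continuous u_gt0 id_h) id_h n.
exists (fixed_image (iter n h)); split.
- apply: card_fixed_image_lt => e_surj; apply: g_nsurj => y.
  have [x ex] := e_surj (b y).
  have e_unfold : iter n h x = h (iter n.-1 h x) by rewrite -iterS prednK.
  by exists (iter n.-1 h x); apply: (can_inj ba); rewrite -ex e_unfold.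
- have ce := NPhomotopicN_continuous u_gt0 id_e.
  exact: NPhomotopy_equiv_fixed_image ce e_idem id_e.
Qed.

Lemma NPhomotopic_id_nonsurj_of_smaller_equiv u (X Y : dimage) :
  #|Y| < #|X| -> NPhomotopy_equiv u X Y ->
  exists2 k : X -> X, ~ (forall y, exists x, k x = y) & NPhomotopic u id k.
Proof.
move=> lt_YX [f [g [_ _ /NPhomotopicP gf _]]].
exists (g \o f); last by apply/NPhomotopicP; apply: NPhomotopicN_sym.
move=> gf_surj; move: lt_YX; apply/negP; rewrite -leqNgt.
apply: (@leq_trans #|codom g|); last by rewrite -(size_codom g) card_size.
apply/subset_leq_card/subsetP => x _.
by have [z <-] := gf_surj x; apply: codom_f.
Qed.

Theorem mainTheorem7 (i : nat) (X : dimage) :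
  (i = 1 \/ i = 2) ->
  (NPirreducible i X <->
   ~ exists (a g : X -> X),
       [/\ dautomorphism a, ~ (forall y : X, exists x, g x = y)
         & NPhomotopic i a g]).
Proof.
move=> i12; have i_gt0 : 0 < i by case: i12 => ->.
split=> [irr [a [g [aut_a g_nsurj ag]]] | no_aut [Y [lt_YX equiv_XY]]].
- exact: irr (NPreducible_of_aut_homotopic_nonsurj i_gt0 aut_a g_nsurj ag).
- have [g g_nsurj idg] := NPhomotopic_id_nonsurj_of_smaller_equiv lt_YX equiv_XY.
  apply: no_aut; exists id, g; split=> //.
  by split=> [// | ]; exists id; split.
Qed.
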